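(* Let $\mathbb K$ be a field with $2\in\mathbb K^\times$, $A$ a unital commutative associative $\mathbb K$-algebra, $\mathfrak k$ a $\mathbb K$-Lie algebra, $\mathfrak g=A\otimes\mathfrak k$ and $\mathfrak z$ a vector space. A linear map $f=f_1\circ p_1+f_2\circ p_2+f_3\circ p_3:\Lambda^2(\mathfrak g)\to\mathfrak z$ is a 2-cocycle if and only if both $f_1\circ p_1+f_2\circ p_2$ and $f_3\circ p_3$ are 2-cocycles.
   Context: $\mathfrak g$ has bracket $[a\otimes x,a'\otimes x']=aa'\otimes[x,x']$, $ax=a\otimes x$, unit $\mathbf 1$. $v\wedge w=\tfrac12(v\otimes w-w\otimes v)$, $v\vee w=\tfrac12(v\otimes w+w\otimes v)$. $I_A$ is the kernel of multiplication $S^2(A)\to A$. $p_1(ax\wedge by)=a\wedge b\otimes x\vee y\in\Lambda^2(A)\otimes S^2(\mathfrak k)$, $p_2(ax\wedge by)=ab\otimes x\wedge y\in A\otimes\Lambda^2(\mathfrak k)$, $p_3(ax\wedge by)=(a\vee b-ab\vee\mathbf 1)\otimes x\wedge y\in I_A\otimes\Lambda^2(\mathfrak k)$; together they form a linear isomorphism of $\Lambda^2(\mathfrak g)$ onto the direct sum, and $f_1,f_2,f_3$ are arbitrary linear maps on these three spaces. A 2-cocycle is a linear map on $\Lambda^2(\mathfrak g)$ vanishing on the span of $[u,v]\wedge w+[v,w]\wedge u+[w,u]\wedge v$, $u,v,w\in\mathfrak g$. *)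

From HB Require Import structures.
From mathcomp Require Import all_boot all_algebra.
Set Implicit Arguments. Unset Strict Implicit. Unset Printing Implicit Defensive.
Import GRing.Theory.
Local Open Scope ring_scope.

Definition islinear (K : fieldType) (U V : lmodType K) (f : U -> V) : Prop :=
  forall (c : K) (u v : U), f (c *: u + v) = c *: f u + f v.

Definition bilinear_map (K : fieldType) (U1 U2 V : lmodType K)
  (f : U1 -> U2 -> V) : Prop :=
  (forall u2, islinear (fun u1 => f u1 u2)) /\ (forall u1, islinear (f u1)).

Definition trilinear_map (K : fieldType) (U1 U2 U3 V : lmodType K)
  (f : U1 -> U2 -> U3 -> V) : Prop :=
  [/\ (forall u2 u3, islinear (fun u1 => f u1 u2 u3)),
      (forall u1 u3, islinear (fun u2 => f u1 u2 u3)) &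
      (forall u1 u2, islinear (f u1 u2))].

Definition quadrilinear_map (K : fieldType) (U1 U2 U3 U4 V : lmodType K)
  (f : U1 -> U2 -> U3 -> U4 -> V) : Prop :=
  [/\ (forall u2 u3 u4, islinear (fun u1 => f u1 u2 u3 u4)),
      (forall u1 u3 u4, islinear (fun u2 => f u1 u2 u3 u4)),
      (forall u1 u2 u4, islinear (fun u3 => f u1 u2 u3 u4)) &
      (forall u1 u2 u3, islinear (f u1 u2 u3))].

Definition is_Lie_bracket (K : fieldType) (L : lmodType K) (br : L -> L -> L) : Prop :=
  [/\ bilinear_map br, (forall x, br x x = 0) &
      (forall x y w, br x (br y w) + br y (br w x) + br w (br x y) = 0)].

(* (g, iota) is a tensor product A (x) k : iota is bilinear, pure tensors
   span g, and every bilinear map out of A x k factors linearly through iota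
   (existence + spanning = the universal property). *)
Definition is_tensor_product (K : fieldType) (A kT g : lmodType K)
  (iota : A -> kT -> g) : Prop :=
  [/\ bilinear_map iota,
      (forall u : g, exists s : seq (A * kT), u = \sum_(p <- s) iota p.1 p.2) &
      (forall (W : lmodType K) (phi : A -> kT -> W), bilinear_map phi ->
         exists psi : g -> W, islinear psi /\ forall a x, psi (iota a x) = phi a x)].

Definition is_current_bracket (K : fieldType) (A : comAlgType K) (kT g : lmodType K)
  (brk : kT -> kT -> kT) (iota : A -> kT -> g) (brg : g -> g -> g) : Prop :=
  bilinear_map brg /\
  forall a a' x x', brg (iota a x) (iota a' x') = iota (a * a') (brk x x').

(* linear maps on Lambda^2(A) (x) S^2(k), as multilinear maps
   G(a,b,x,y) = f(a/\b (x) x\/y) *)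
Definition L2S2_form (K : fieldType) (A kT z : lmodType K)
  (G : A -> A -> kT -> kT -> z) : Prop :=
  [/\ quadrilinear_map G, (forall a b x y, G b a x y = - G a b x y) &
      (forall a b x y, G a b y x = G a b x y)].

(* linear maps on A (x) Lambda^2(k) : G(c,x,y) = f(c (x) x/\y) *)
Definition AL2_form (K : fieldType) (A kT z : lmodType K)
  (G : A -> kT -> kT -> z) : Prop :=
  trilinear_map G /\ (forall c x y, G c y x = - G c x y).

(* linear maps on S^2(A) (x) Lambda^2(k) : G(a,b,x,y) = F(a\/b (x) x/\y);
   f3 on I_A (x) Lambda^2(k) is the restriction of such an F. *)
Definition S2L2_form (K : fieldType) (A kT z : lmodType K)
  (G : A -> A -> kT -> kT -> z) : Prop :=
  [/\ quadrilinear_map G, (forall a b x y, G b a x y = G a b x y) &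
      (forall a b x y, G a b y x = - G a b x y)].

(* a linear map f on Lambda^2(g), given as the alternating bilinear map
   B(u,v) = f(u/\v), is a 2-cocycle *)
Definition cocycle2 (K : fieldType) (g z : lmodType K) (brg : g -> g -> g)
  (B : g -> g -> z) : Prop :=
  forall u v w, B (brg u v) w + B (brg v w) u + B (brg w u) v = 0.

From HB Require Import structures.
From mathcomp Require Import all_boot all_algebra.
Import GRing.Theory.
Local Open Scope ring_scope.
Set Implicit Arguments. Unset Strict Implicit.

(* Write f = f12 + f3' with f12 = f1 o p1 + f2 o p2 and f3' = f3 o p3, and
   suppose f is a cocycle.  On pure tensors, symmetrise f in A and evaluate it
   on a \/ b - ab \/ 1, as p3 does: f1 drops out because it is alternating in
   A, f2 because it only sees ab, and 2 f3' remains.  The cocycle identity at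
   c = 1 then shows that (x, y, w) |-> f3'(a [x,y], b w) changes sign under the
   cyclic shift; as the shift has order 3 and 2 is invertible, it vanishes.
   So f3' kills [g,g] /\ g, hence is a cocycle, and so is f12 = f - f3'. *)

Lemma islinearD (K : fieldType) (U V : lmodType K) (f : U -> V) u v :
  islinear f -> f (u + v) = f u + f v.
Proof. by move=> lin_f; have := lin_f 1 u v; rewrite !scale1r. Qed.

Lemma islinear0 (K : fieldType) (U V : lmodType K) (f : U -> V) :
  islinear f -> f 0 = 0.
Proof.
by move=> lin_f; apply: (@addrI _ (f 0)); rewrite -islinearD // !addr0.
Qed.

Lemma islinear_sum (K : fieldType) (U V : lmodType K) (f : U -> V) (I : Type)
    (s : seq I) (F : I -> U) :
  islinear f -> f (\sum_(i <- s) F i) = \sum_(i <- s) f (F i).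
Proof.
move=> lin_f; elim: s => [|i s IHs]; first by rewrite !big_nil islinear0.
by rewrite !big_cons islinearD // IHs.
Qed.

Lemma islinear_comp (K : fieldType) (U V W : lmodType K) (f : U -> V)
    (h : V -> W) :
  islinear f -> islinear h -> islinear (fun u => h (f u)).
Proof. by move=> lin_f lin_h c u v; rewrite lin_f lin_h. Qed.

Lemma mulrn2_eq0 (K : fieldType) (V : lmodType K) (v : V) :
  (2 : K) != 0 -> v *+ 2 = 0 -> v = 0.
Proof.
by move=> two_neq0 /eqP; rewrite -scaler_nat scaler_eq0 (negPf two_neq0) => /eqP.
Qed.

Lemma cyclic_skew_eq0 (K : fieldType) (V : lmodType K) (X : Type)
    (T : X -> X -> X -> V) :
  (2 : K) != 0 -> (forall x y w, T y w x + T w x y = 0) ->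
  forall x y w, T x y w = 0.
Proof.
move=> two_neq0 skewT x y w.
have skew x' y' w' : T y' w' x' = - T w' x' y'.
  by apply/eqP; rewrite -addr_eq0 skewT.
apply: mulrn2_eq0 => //.
by rewrite mulr2n {1}(skew w x y) (skew x y w) (skew y w x) opprK addNr.
Qed.

Lemma cocycle2D (K : fieldType) (g z : lmodType K) (brg : g -> g -> g)
    (B B' : g -> g -> z) :
  cocycle2 brg B -> cocycle2 brg B' -> cocycle2 brg (fun u v => B u v + B' u v).
Proof.
move=> cocB cocB' u v w /=.
rewrite (addrACA (B (brg u v) w)) (addrACA (B (brg u v) w + _)).
by rewrite cocB cocB' addr0.
Qed.

Section BracketVanishing.

Variables (K : fieldType) (g z : lmodType K) (brg : g -> g -> g).
Variables B B' : g -> g -> z.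
Hypothesis B'_bracket : forall u v w, B' (brg u v) w = 0.

Lemma cocycle2_bracket_eq0 : cocycle2 brg B'.
Proof. by move=> u v w; rewrite !B'_bracket !addr0. Qed.

Lemma cocycle2_addr_bracket_eq0 :
  cocycle2 brg (fun u v => B u v + B' u v) <-> cocycle2 brg B.
Proof.
by split=> cocB u v w; have := cocB u v w; rewrite /= !B'_bracket !addr0.
Qed.

End BracketVanishing.

(* F symmetrised in A and evaluated on a \/ b - ab \/ 1, the A-factor of p3. *)
Definition IA_part (R : comPzRingType) (X : Type) (V : zmodType)
    (F : R -> R -> X -> X -> V) a b x y :=
  (F a b x y + F b a x y) - (F (a * b) 1 x y + F 1 (a * b) x y).

Section IAPart.

Variables (R : comPzRingType) (X : Type) (V : zmodType).
Implicit Types F G : R -> R -> X -> X -> V.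

Lemma eq_IA_part F G : (forall a b x y, F a b x y = G a b x y) ->
  forall a b x y, IA_part F a b x y = IA_part G a b x y.
Proof. by move=> eqFG a b x y; rewrite /IA_part !eqFG. Qed.

Lemma IA_partD F G a b x y :
  IA_part (fun a b x y => F a b x y + G a b x y) a b x y
  = IA_part F a b x y + IA_part G a b x y.
Proof.
rewrite /IA_part (addrACA (F a b x y)) (addrACA (F (a * b) 1 x y)) opprD.
by rewrite (addrACA (F a b x y + _)).
Qed.

Lemma IA_part_alt F : (forall a b x y, F b a x y = - F a b x y) ->
  forall a b x y, IA_part F a b x y = 0.
Proof.
by move=> F_alt a b x y; rewrite /IA_part (F_alt a b) (F_alt (a * b) 1) !subrr.
Qed.

Lemma IA_part_mul (G : R -> X -> X -> V) a b x y :
  IA_part (fun a b x y => G (a * b) x y) a b x y = 0.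
Proof. by rewrite /IA_part mulrC !mulr1 !mul1r subrr. Qed.

Lemma IA_part_I F : (forall a b x y, F b a x y = F a b x y) ->
  forall a b x y, IA_part (fun a b x y => F a b x y - F (a * b) 1 x y) a b x y
                  = (F a b x y - F (a * b) 1 x y) *+ 2.
Proof.
move=> F_sym a b x y; rewrite /IA_part (F_sym a b) (F_sym (a * b) 1) [b * a]mulrC.
by rewrite !mulr1 !mul1r !subrr addr0 subr0 mulr2n.
Qed.

Lemma IA_part_cocycle (br : X -> X -> X) F :
  (forall a b c x y w, F (a * b) c (br x y) w + F (b * c) a (br y w) x
                       + F (c * a) b (br w x) y = 0) ->
  forall a b x y w, IA_part F a b (br y w) x + IA_part F a b (br w x) y = 0.
Proof.
move=> cocF a b x y w.
have sym_sum a' b' : (F a' b' (br y w) x + F b' a' (br y w) x)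
                     + (F a' b' (br w x) y + F b' a' (br w x) y)
                     = - (F (a' * b') 1 (br x y) w *+ 2).
  have := cocF a' b' 1 x y w; rewrite mulr1 mul1r -addrA => /eqP.
  rewrite addr_eq0 => /eqP cocF1.
  have := cocF b' a' 1 x y w; rewrite mulr1 mul1r -addrA [b' * a']mulrC => /eqP.
  rewrite addr_eq0 => /eqP cocF2.
  rewrite mulr2n opprD {1}cocF1 cocF2 !opprK (addrACA (F b' a' _ x)).
  by rewrite [F b' a' _ x + _]addrC.
by rewrite /IA_part addrACA -opprD !sym_sum mulr1 subrr.
Qed.

End IAPart.

Section CurrentAlgebra.

Variables (K : fieldType) (A : comAlgType K) (kT g z : lmodType K).
Variables (brk : kT -> kT -> kT) (iota : A -> kT -> g) (brg : g -> g -> g).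
Hypothesis tensor_iota : is_tensor_product iota.
Hypothesis current_brg : is_current_bracket brk iota brg.

Lemma linear_tensor_eq0 (W : lmodType K) (f : g -> W) :
  islinear f -> (forall a x, f (iota a x) = 0) -> forall u, f u = 0.
Proof.
case: tensor_iota => _ span_iota _ lin_f f_tensor u.
have [s ->] := span_iota u.
by rewrite islinear_sum //; apply: big1 => p _; apply: f_tensor.
Qed.

Lemma form_bracket_eq0 (B : g -> g -> z) : bilinear_map B ->
  (forall p q x y w, B (iota p (brk x y)) (iota q w) = 0) ->
  forall u v w, B (brg u v) w = 0.
Proof.
case: current_brg => -[brg_linl brg_linr] brg_tensor [B_linl B_linr] B_brk u v w.
apply: (linear_tensor_eq0 (f := fun u => B (brg u v) w)) => [|a x].
  exact: islinear_comp (brg_linl v) (B_linl w).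
apply: (linear_tensor_eq0 (f := fun v => B (brg (iota a x) v) w)) => [|b y].
  exact: islinear_comp (brg_linr _) (B_linl w).
apply: linear_tensor_eq0 => [|c t]; first exact: B_linr.
by rewrite brg_tensor B_brk.
Qed.

Lemma cocycle2_tensor (B : g -> g -> z) : cocycle2 brg B ->
  forall a b c x y w,
    B (iota (a * b) (brk x y)) (iota c w) + B (iota (b * c) (brk y w)) (iota a x)
    + B (iota (c * a) (brk w x)) (iota b y) = 0.
Proof.
case: current_brg => _ brg_tensor cocB a b c x y w.
by have := cocB (iota a x) (iota b y) (iota c w); rewrite !brg_tensor.
Qed.

Lemma cocycle2_p3_bracket_eq0 (G1 G3 : A -> A -> kT -> kT -> z)
    (G2 : A -> kT -> kT -> z) (B12 B3 : g -> g -> z) :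
  (2 : K) != 0 -> L2S2_form G1 -> S2L2_form G3 -> bilinear_map B3 ->
  (forall a b x y, B12 (iota a x) (iota b y) = G1 a b x y + G2 (a * b) x y) ->
  (forall a b x y, B3 (iota a x) (iota b y) = G3 a b x y - G3 (a * b) 1 x y) ->
  cocycle2 brg (fun u v => B12 u v + B3 u v) ->
  forall u v w, B3 (brg u v) w = 0.
Proof.
move=> two_neq0 [_ G1_alt _] [_ G3_sym _] B3_bil defB12 defB3 cocB.
pose F a b x y := B12 (iota a x) (iota b y) + B3 (iota a x) (iota b y).
have IA_F a b x y : IA_part F a b x y = B3 (iota a x) (iota b y) *+ 2.
  rewrite (@eq_IA_part _ _ _ _ (fun a b x y =>
      G1 a b x y + G2 (a * b) x y + (G3 a b x y - G3 (a * b) 1 x y)));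
    last by move=> *; rewrite /F defB12 defB3.
  by rewrite 2!IA_partD IA_part_alt // IA_part_mul IA_part_I // defB3 !add0r.
apply: form_bracket_eq0 => // p q x y w.
pose T x y w := B3 (iota p (brk x y)) (iota q w).
apply: (cyclic_skew_eq0 (T := T)) => // {}x {}y {}w.
apply: mulrn2_eq0 => //; rewrite mulrnDl -!IA_F.
exact: IA_part_cocycle (cocycle2_tensor cocB) p q x y w.
Qed.

End CurrentAlgebra.

Theorem corollary3p2 (K : fieldType) (A : comAlgType K) (kT : lmodType K)
  (brk : kT -> kT -> kT) (g : lmodType K) (iota : A -> kT -> g)
  (brg : g -> g -> g) (z : lmodType K)
  (G1 : A -> A -> kT -> kT -> z) (G2 : A -> kT -> kT -> z)
  (G3 : A -> A -> kT -> kT -> z) (B12 B3 : g -> g -> z) :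
  (2 : K) != 0 ->
  is_Lie_bracket brk ->
  is_tensor_product iota ->
  is_current_bracket brk iota brg ->
  L2S2_form G1 -> AL2_form G2 -> S2L2_form G3 ->
  bilinear_map B12 -> bilinear_map B3 ->
  (forall a b x y, B12 (iota a x) (iota b y) = G1 a b x y + G2 (a * b) x y) ->
  (forall a b x y, B3 (iota a x) (iota b y) = G3 a b x y - G3 (a * b) 1 x y) ->
  (cocycle2 brg (fun u v => B12 u v + B3 u v) <->
   cocycle2 brg B12 /\ cocycle2 brg B3).
Proof.
move=> two_neq0 _ tensor_iota current_brg G1_form _ G3_form _ B3_bil defB12 defB3.
split=> [cocB | [cocB12 cocB3]]; last exact: cocycle2D.
have B3_bracket := cocycle2_p3_bracket_eq0 tensor_iota current_brg two_neq0
  G1_form G3_form B3_bil defB12 defB3 cocB.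
split; last exact: cocycle2_bracket_eq0.
exact/(cocycle2_addr_bracket_eq0 _ B3_bracket).
Qed.
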